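(* Assume $$\lim_{h\to0}\frac{C_1\kappa\,h^{-1/2}}{\big(\Delta^{-1}(C_1h^{-1/2})\big)^2}=\infty .$$ Then there are constants $C_1,C_2>0$, depending on the perturbation $H$ and on $\kappa$ but not on $t$ or $h$, such that for all sufficiently small $h$, all $t\in(0,t_0)$ and all distinct $m,m'\in\mathbb Z^d$ with $I_m,I_{m'}\in D$, $m\in\mathcal M_h(t)$ and $|I_m-I_{m'}|\le h\,\Delta^{-1}(C_1h^{-1/2})$, one has $$|\mu_m-\mu_{m'}|\ge C_2h^{3/2}.$$
   Context: Setting: $D\subset\mathbb R^d$ a bounded convex domain of actions; $K^0(I;t,h)=\sum_{0\le j}K_j(I;t)h^j$ is the real-valued integrable part of the quantum Birkhoff normal form of $P_h(t)$, with $K_j$ smooth with derivatives bounded uniformly in $t\in(0,t_0)$, and $K_0(I;t)$ is the integrable part of the Birkhoff normal form of the classical Hamiltonian. $\Delta$ is a $\sigma$-approximation function (continuous, strictly increasing, unbounded, $\log\Delta(s)/s^{1/\sigma}\searrow0$, $\int_\varsigma^\infty\log\Delta(s)s^{-1-1/\sigma}ds<\infty$), $\Delta^{-1}$ its inverse. $E_\kappa(t)\subset D$ is the set of actions $I$ with $\omega=\nabla_IK_0(I;t)$ satisfying $|\langle\omega,k\rangle|\ge\kappa/\Delta(|k|)$ for all $k\in\mathbb Z^d\setminus\{0\}$. $I_m=h(m+\vartheta/4)$ for $m\in\mathbb Z^d$, $\vartheta$ the Maslov class of the tori; $\mathcal M_h(t)=\{m\in\mathbb Z^d:\operatorname{dist}(E_\kappa(t),h(m+\vartheta/4))\le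 Lh\}$ for a fixed $L>0$; quasi-eigenvalues $\mu_m=\mu_m(t;h)=K^0(I_m;t,h)$. *)

From HB Require Import structures.
From mathcomp Require Import all_boot all_order all_algebra.
From mathcomp Require Import all_classical all_reals all_analysis.
Set Implicit Arguments. Unset Strict Implicit. Unset Printing Implicit Defensive.
Import Order.TTheory GRing.Theory Num.Theory.
Import numFieldNormedType.Exports.
Local Open Scope classical_set_scope.
Local Open Scope ring_scope.

Section Defs.
Variables (R : realType) (d : nat).
Notation vec := 'rV[R]_d.

Definition enorm (v : vec) : R := Num.sqrt (\sum_(i < d) v 0 i ^+ 2).

Definition inner (u v : vec) : R := \sum_(i < d) u 0 i * v 0 i.

Definition ebasis (i : 'I_d) : vec := \row_j (if j == i then 1 else 0).

Definition grad (f : vec -> R) (x : vec) : vec := \row_i ('D_(ebasis i) f x).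

Fixpoint iter_dd (f : vec -> R) (vs : seq vec) : vec -> R :=
  match vs with
  | [::] => f
  | v :: vs' => 'D_v (iter_dd f vs')
  end.

Definition smooth_on (D : set vec) (f : vec -> R) : Prop :=
  forall (vs : seq vec) (x : vec), D x -> differentiable (iter_dd f vs) x.

Definition bounded_convex_domain (D : set vec) : Prop :=
  open D /\ D !=set0 /\
  (exists M : R, forall x, D x -> enorm x <= M) /\
  (forall x y (s : R), D x -> D y -> 0 <= s <= 1 -> D (x + s *: (y - x))).

Definition sigma_approx (sigma : R) (Delta : R -> R) : Prop :=
  {within `[0, +oo[, continuous Delta} /\
  (forall s1 s2, 0 <= s1 -> s1 < s2 -> Delta s1 < Delta s2) /\
  (forall s, 0 <= s -> 0 < Delta s) /\
  (forall M, exists s, 0 <= s /\ M < Delta s) /\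
  exists vsig : R, 0 < vsig /\
    (forall s1 s2, vsig <= s1 -> s1 <= s2 ->
        ln (Delta s2) / powR s2 sigma^-1 <= ln (Delta s1) / powR s1 sigma^-1) /\
    ((fun s => ln (Delta s) / powR s sigma^-1) @ +oo --> 0) /\
    (lebesgue_measure).-integrable `[vsig, +oo[
        (fun s => (ln (Delta s) * powR s (- 1 - sigma^-1))%:E).

Definition is_inverse_of (Delta Dinv : R -> R) : Prop :=
  forall y, Delta 0 <= y -> 0 <= Dinv y /\ Delta (Dinv y) = y.

Definition rvec (k : 'rV[int]_d) : vec := \row_i ((k 0 i)%:~R).

Definition Iq (h : R) (vartheta m : 'rV[int]_d) : vec :=
  \row_i (h * ((m 0 i)%:~R + (vartheta 0 i)%:~R / 4)).

(* the Diophantine set E_kappa(t), given K0 = K_0(.;t) *)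
Definition Ekappa (D : set vec) (K0 : vec -> R) (Delta : R -> R) (kappa : R)
  : set vec :=
  [set I | D I /\ forall k : 'rV[int]_d, k != 0 ->
      kappa / Delta (enorm (rvec k)) <= `| inner (grad K0 I) (rvec k) |].

(* distance (in \bar R) from a point to a set; +oo for the empty set *)
Definition setdist (E : set vec) (x : vec) : \bar R :=
  ereal_inf [set (enorm (x - y))%:E | y in E].

Definition Mh (D : set vec) (K0 : vec -> R) (Delta : R -> R) (kappa L h : R)
  (vartheta : 'rV[int]_d) : set 'rV[int]_d :=
  [set m | (setdist (Ekappa D K0 Delta kappa) (Iq h vartheta m) <= (L * h)%:E)%E].

End Defs.

From HB Require Import structures.
From mathcomp Require Import all_boot all_order all_algebra.
From mathcomp Require Import all_classical all_reals all_analysis.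
From mathcomp Require Import ring lra.
Set Implicit Arguments. Unset Strict Implicit. Unset Printing Implicit Defensive.
Import Order.TTheory GRing.Theory Num.Theory.
Import numFieldNormedType.Exports.
Local Open Scope classical_set_scope.
Local Open Scope ring_scope.

(* Write x = I_m, y = I_m' and x - y = h k, so that 0 < |k| <= X := Dinv (C1 h^(-1/2)).
   By the mean value theorem, mu_m - mu_m' is the increment of K^0 - K_0 between y and x,
   which is O(h |x - y|) because K^0 - K_0 = O(h) in C^1, plus a derivative of K_0 in
   direction h k at a point of [y, x]. Moving that point to some E in E_kappa within
   (L + 1) h of x costs O(|x - y| (|x - y| + h)) by the bound on the Hessian of K_0, and at E
   the Diophantine condition gives |<grad K_0 (E), h k>| >= h kappa / Delta(|k|)
   >= kappa h^(3/2) / C1. Both errors are O(h^2 X^2), and the hypothesis on Dinv makes this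
   at most half of the leading term for small h. *)

Section Calculus.
Variables (R : realType) (d : nat).
Notation vec := 'rV[R]_d.
Implicit Types (g : vec -> R) (x y u : vec) (s : R).

Lemma line_diff_quotient g x u s :
  (fun h : R => h^-1 *: (g (x + (h *: 1 + s) *: u) - g (x + s *: u)))
  = (fun h : R => h^-1 *: (g (h *: u + (x + s *: u)) - g (x + s *: u))).
Proof.
apply/funext => h /=; congr (_ *: (g _ - _)).
by rewrite scalerDl addrCA; congr (_ + (_ + _)); rewrite -[h *: 1]/(h * 1) mulr1.
Qed.

Lemma derive_line g x u s :
  derive (fun s : R => g (x + s *: u)) s 1 = 'D_u g (x + s *: u).
Proof. by rewrite /derive line_diff_quotient. Qed.

Lemma derivable_line g x u s :
  derivable g (x + s *: u) u -> derivable (fun s : R => g (x + s *: u)) s 1.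
Proof. by rewrite /derivable line_diff_quotient. Qed.

Lemma MVT_line g x y :
  (forall s, 0 <= s <= 1 -> differentiable g (x + s *: (y - x))) ->
  exists2 s, 0 <= s <= 1 & g y - g x = 'D_(y - x) g (x + s *: (y - x)).
Proof.
move=> gdiff; set u := y - x.
have gline s : 0 <= s <= 1 -> derivable (fun s : R => g (x + s *: u)) s 1.
  by move=> s01; apply/derivable_line/diff_derivable/gdiff.
have := @MVT_segment _ (fun s => g (x + s *: u)) (fun s => 'D_u g (x + s *: u)) 0 1 ler01.
case.
- move=> s; rewrite in_itv /= => /andP[s0 s1].
  by rewrite -derive_line; apply/derivableP/gline; rewrite (ltW s0) (ltW s1).
- by apply: derivable_within_continuous => s; rewrite in_itv /=; apply: gline.
- move=> c c01; rewrite subr0 mulr1 scale1r scale0r addr0.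
  rewrite (_ : x + u = y) => [->|]; first by exists c.
  by rewrite /u addrC subrK.
Qed.

Lemma row_ebasis_sum u : u = \sum_(i < d) u 0 i *: ebasis R i.
Proof.
apply/rowP => j; rewrite summxE.
under eq_bigr do rewrite !mxE.
rewrite (bigD1 j) //= eqxx mulr1 big1 ?addr0 // => i /negbTE.
by rewrite eq_sym => ->; rewrite mulr0.
Qed.

Lemma derive_ebasis_sum g x u : differentiable g x ->
  'D_u g x = \sum_(i < d) u 0 i * 'D_(ebasis R i) g x.
Proof.
move=> gx; rewrite deriveE // {1}(row_ebasis_sum u) linear_sum.
by apply: eq_bigr => i _; rewrite linearZ /= deriveE.
Qed.

Definition l1norm (v : vec) : R := \sum_(i < d) `|v 0 i|.

Lemma l1norm_ge0 (v : vec) : 0 <= l1norm v.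
Proof. by apply: sumr_ge0 => i _. Qed.

Lemma l1normZ s (v : vec) : l1norm (s *: v) = `|s| * l1norm v.
Proof. by rewrite /l1norm mulr_sumr; apply: eq_bigr => i _; rewrite !mxE normrM. Qed.

Lemma l1norm_subD (a b c : vec) : l1norm (a - b) <= l1norm (a - c) + l1norm (c - b).
Proof. by rewrite /l1norm -big_split; apply: ler_sum => i _; rewrite !mxE ler_distD. Qed.

Lemma enorm_ge0 (v : vec) : 0 <= enorm v.
Proof. exact: sqrtr_ge0. Qed.

Lemma enormZ s (v : vec) : enorm (s *: v) = `|s| * enorm v.
Proof.
rewrite /enorm (_ : \sum_(i < d) _ = s ^+ 2 * \sum_(i < d) v 0 i ^+ 2).
  by rewrite sqrtrM ?sqr_ge0 // sqrtr_sqr.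
by rewrite mulr_sumr; apply: eq_bigr => i _; rewrite !mxE exprMn.
Qed.

Lemma enormZ_ler_pM2l h (v : vec) X : 0 < h ->
  (enorm (h *: v) <= h * X) = (enorm v <= X).
Proof. by move=> h0; rewrite enormZ gtr0_norm // ler_pM2l. Qed.

Lemma coord_le_enorm (v : vec) i : `|v 0 i| <= enorm v.
Proof.
rewrite -sqrtr_sqr; apply: ler_wsqrtr.
by rewrite (bigD1 i) //= lerDl; apply: sumr_ge0 => j _; apply: sqr_ge0.
Qed.

Lemma l1norm_le_enorm (v : vec) : l1norm v <= d%:R * enorm v.
Proof.
apply: (@le_trans _ _ (\sum_(i < d) enorm v)).
  by apply: ler_sum => i _; apply: coord_le_enorm.
by rewrite sumr_const card_ord mulr_natl.
Qed.

Lemma enorm_ebasis (i : 'I_d) : enorm (ebasis R i) = 1.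
Proof.
rewrite /enorm (bigD1 i) //= big1 ?addr0 ?mxE ?eqxx ?expr1n ?sqrtr1 //.
by move=> j /negbTE ji; rewrite mxE ji expr0n.
Qed.

Lemma enorm_rvec_ge1 (k : 'rV[int]_d) : k != 0 -> 1 <= enorm (rvec R k).
Proof.
move=> k0; have [i ki0] : exists i, k 0 i != 0.
  apply/existsP; apply: contraR k0 => /existsPn k0.
  by apply/eqP/rowP => i; rewrite mxE; apply/eqP; move: (k0 i); rewrite negbK.
apply: le_trans (coord_le_enorm _ i); rewrite mxE -intr_norm ler1z.
by rewrite -gtz0_ge1 normr_gt0.
Qed.

Lemma norm_derive_le_l1 g x u B : differentiable g x ->
  (forall i, `|'D_(ebasis R i) g x| <= B) -> `|'D_u g x| <= B * l1norm u.
Proof.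
move=> gx gB; rewrite derive_ebasis_sum //.
apply: le_trans (ler_norm_sum _ _ _) _.
rewrite /l1norm mulr_sumr; apply: ler_sum => i _.
by rewrite normrM mulrC ler_wpM2r.
Qed.

Lemma normB_le_l1_segment g x y B :
  (forall s, 0 <= s <= 1 -> differentiable g (x + s *: (y - x))) ->
  (forall s i, 0 <= s <= 1 -> `|'D_(ebasis R i) g (x + s *: (y - x))| <= B) ->
  `|g y - g x| <= B * l1norm (y - x).
Proof.
move=> gdiff gB; have [s s01 ->] := MVT_line gdiff.
apply: norm_derive_le_l1; first exact: gdiff.
by move=> i; apply: gB.
Qed.

End Calculus.

Section QuasiEigenvalueGap.
Variables (R : realType) (d : nat) (D : set 'rV[R]_d) (f F : 'rV[R]_d -> R).
Variables (Delta : R -> R) (kappa L h X A B : R).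
Notation vec := 'rV[R]_d.
Notation segment a b s := (a + s *: (b - a)).

Hypothesis convexD :
  forall a b (s : R), D a -> D b -> 0 <= s <= 1 -> D (segment a b s).
Hypothesis f_diff : forall z, D z -> differentiable f z.
Hypothesis df_diff : forall i z, D z -> differentiable ('D_(ebasis R i) f) z.
Hypothesis d2f_bound :
  forall i j z, D z -> `|'D_(ebasis R i) ('D_(ebasis R j) f) z| <= B.
Hypothesis Ff_diff : forall z, D z -> differentiable (fun I => F I - f I) z.
Hypothesis dFf_bound :
  forall i z, D z -> `|'D_(ebasis R i) (fun I => F I - f I) z| <= A * h.
Hypothesis Delta_incr : forall s1 s2 : R, 0 <= s1 -> s1 < s2 -> Delta s1 < Delta s2.
Hypothesis Delta_gt0 : forall s : R, 0 <= s -> 0 < Delta s.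
Hypotheses (h_gt0 : 0 < h) (kappa_gt0 : 0 < kappa) (A_ge0 : 0 <= A) (B_ge0 : 0 <= B).

Lemma norm_deriveB_le (p E v : vec) : D p -> D E ->
  `|'D_v f p - 'D_v f E| <= B * l1norm v * l1norm (p - E).
Proof.
move=> Dp DE; rewrite (derive_ebasis_sum _ (f_diff Dp)).
rewrite (derive_ebasis_sum _ (f_diff DE)) -sumrB.
apply: le_trans (ler_norm_sum _ _ _) _.
rewrite (mulrC B) -mulrA {1}/l1norm mulr_suml; apply: ler_sum => j _.
rewrite -mulrBr normrM; apply: ler_wpM2l; first exact: normr_ge0.
apply: (@normB_le_l1_segment _ _ ('D_(ebasis R j) f) E p B) => [s s01|s i s01].
- exact: df_diff (convexD DE Dp s01).
- exact: d2f_bound (convexD DE Dp s01).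
Qed.

Lemma Ekappa_derive_ge (E : vec) (k : 'rV[int]_d) :
  Ekappa D f Delta kappa E -> k != 0 -> enorm (rvec R k) <= X ->
  h * kappa / Delta X <= `|'D_(h *: rvec R k) f E|.
Proof.
move=> [DE Ediophantine] k0 kX.
have Dk_gt0 : 0 < Delta (enorm (rvec R k)) by apply/Delta_gt0/enorm_ge0.
have DkX : Delta (enorm (rvec R k)) <= Delta X.
  move: kX; rewrite le_eqVlt => /orP[/eqP -> //|kX].
  by apply/ltW/Delta_incr => //; apply: enorm_ge0.
have -> : 'D_(h *: rvec R k) f E = h * inner (grad f E) (rvec R k).
  rewrite (derive_ebasis_sum _ (f_diff DE)) /inner mulr_sumr.
  by apply: eq_bigr => i _; rewrite /grad !mxE -mulrA; congr (_ * _); apply: mulrC.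
rewrite normrM gtr0_norm // -mulrA ler_pM2l //.
apply: le_trans (Ediophantine k k0).
by rewrite ler_pM2l // lef_pV2 ?posrE // (lt_le_trans Dk_gt0).
Qed.

Lemma quasi_eigenvalue_gap_ge (x y E : vec) (k : 'rV[int]_d) :
  D x -> D y -> k != 0 -> x - y = h *: rvec R k ->
  Ekappa D f Delta kappa E -> enorm (x - E) <= (L + 1) * h ->
  enorm (x - y) <= h * X ->
  h * kappa / Delta X - A * h * (d%:R * (h * X))
    - B * (d%:R * (h * X)) * (d%:R * (h * X) + d%:R * ((L + 1) * h))
  <= `|F x - F y|.
Proof.
move=> Dx Dy k0 xy_hk Ek xE xy.
have [p p01 fxy] := MVT_line (fun s s01 => f_diff (convexD Dy Dx s01)).
have Dq := convexD Dy Dx p01.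
set v := x - y in xy_hk xy fxy Dq *; set q := y + p *: v in fxy Dq *.
have DE : D E by case: Ek.
have l1v : l1norm v <= d%:R * (h * X).
  by apply: le_trans (l1norm_le_enorm v) _; rewrite ler_wpM2l.
have l1qE : l1norm (q - E) <= d%:R * (h * X) + d%:R * ((L + 1) * h).
  apply: le_trans (l1norm_subD q E x) _; apply: lerD.
    have -> : q - x = (p - 1) *: v by apply/rowP => i; rewrite !mxE; ring.
    rewrite l1normZ; apply: le_trans l1v; apply: ler_piMl; first exact: l1norm_ge0.
    case/andP: p01 => p0 p1; rewrite distrC ger0_norm ?gerBl; first exact: p0.
    by rewrite subr_ge0; exact: p1.
  by apply: le_trans (l1norm_le_enorm _) _; rewrite ler_wpM2l.
have perturbation : `|(F x - f x) - (F y - f y)| <= A * h * l1norm v.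
  apply: (@normB_le_l1_segment _ _ (fun I => F I - f I) y x) => [s s01|s i s01].
  - exact: Ff_diff (convexD Dy Dx s01).
  - exact: dFf_bound (convexD Dy Dx s01).
have leading : h * kappa / Delta X <= `|'D_v f E|.
  rewrite xy_hk; apply: Ekappa_derive_ge => //.
  by rewrite -(enormZ_ler_pM2l _ _ h_gt0) -xy_hk.
have curvature := norm_deriveB_le v Dq DE.
have -> : F x - F y = ((F x - f x) - (F y - f y)) + 'D_v f E + ('D_v f q - 'D_v f E).
  by rewrite -fxy; ring.
set a := _ - _ in perturbation *; set b := 'D_v f E in leading *.
set c := _ - b in curvature *.
have a_le : `|a| <= A * h * (d%:R * (h * X)).
  apply: le_trans perturbation (ler_wpM2l _ l1v).
  exact: mulr_ge0 A_ge0 (ltW h_gt0).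
have c_le : `|c| <= B * (d%:R * (h * X)) * (d%:R * (h * X) + d%:R * ((L + 1) * h)).
  apply: le_trans curvature _; rewrite -2!mulrA; apply: ler_wpM2l; first exact: B_ge0.
  by apply: ler_pM => //; apply: l1norm_ge0.
have b_le : `|b| <= `|a + b + c| + `|a| + `|c|.
  rewrite {1}(_ : b = a + b + c - a - c); last by ring.
  apply: le_trans (ler_normB _ _) _; rewrite lerD2r; exact: ler_normB.
lra.
Qed.

End QuasiEigenvalueGap.

Lemma leading_term_dominates (R : realFieldType) (A B dd L r X C1 kappa : R) :
  0 <= A -> 0 <= B -> 0 <= dd -> 0 <= L -> 0 < r -> 1 <= X -> 0 < C1 ->
  2 * C1 ^+ 2 * (A * dd + B * dd ^+ 2 * (L + 2)) <= C1 * kappa * r^-1 / X ^+ 2 ->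
  kappa / (2 * C1) * (r ^+ 2 * r) <= r ^+ 2 * kappa / (C1 / r)
    - A * r ^+ 2 * (dd * (r ^+ 2 * X))
    - B * (dd * (r ^+ 2 * X)) * (dd * (r ^+ 2 * X) + dd * ((L + 1) * r ^+ 2)).
Proof.
move=> A0 B0 dd0 L0 r0 X1 C0 small.
set M := A * dd + B * dd ^+ 2 * (L + 2).
set T := kappa / (2 * C1).
have MX2r_le : M * X ^+ 2 * r <= T.
  have X0 : 0 < X by lra.
  by move: small; rewrite -/M !ler_pdivlMr ?exprn_gt0 ?mulr_gt0 //; nra.
have -> : r ^+ 2 * kappa / (C1 / r) = 2 * T * (r ^+ 2 * r).
  by rewrite /T; field; rewrite ?gt_eqF.
have r4X : 0 <= r ^+ 4 * X by apply: mulr_ge0; [exact/exprn_ge0/ltW | lra].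
have e1 : A * dd * (r ^+ 4 * X) <= A * dd * (r ^+ 4 * X ^+ 2).
  apply: ler_wpM2l; first exact: mulr_ge0.
  by apply: ler_wpM2l; [exact/exprn_ge0/ltW | rewrite expr2 ler_peMl //; lra].
have e2 : B * dd ^+ 2 * (r ^+ 4 * X) * (X + (L + 1))
    <= B * dd ^+ 2 * (r ^+ 4 * X) * (X * (L + 2)).
  by apply: ler_wpM2l; [apply: mulr_ge0 r4X; apply: mulr_ge0 B0 (sqr_ge0 dd) | nra].
have := ler_wpM2r (ltW (exprn_gt0 3 r0)) MX2r_le.
rewrite /M; nra.
Qed.

Section UniformBounds.
Variables (R : realType) (d : nat) (D : set 'rV[R]_d) (P : R -> Prop).
Notation vec := 'rV[R]_d.

Lemma uniform_hessian_bound (g : R -> vec -> R) :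
  (forall vs : seq vec, exists C : R, forall t, P t -> forall x, D x ->
     `|iter_dd (g t) vs x| <= C * \prod_(v <- vs) enorm v) ->
  exists2 B : R, 0 <= B & forall t, P t -> forall i j z, D z ->
    `|'D_(ebasis R i) ('D_(ebasis R j) (g t)) z| <= B.
Proof.
move=> gbound.
have [C Cbound] := choice (fun p : 'I_d * 'I_d => gbound [:: ebasis R p.1; ebasis R p.2]).
exists (\sum_p `|C p|); first exact: sumr_ge0.
move=> t Pt i j z Dz; have := Cbound (i, j) t Pt z Dz.
rewrite /= !big_cons big_nil !enorm_ebasis !mulr1 => /le_trans; apply.
by apply: le_trans (ler_norm _) _; rewrite (bigD1 (i, j)) //= lerDl sumr_ge0.
Qed.

Lemma uniform_gradient_bound_near (G : R -> R -> vec -> R) (N : nat) :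
  (forall vs : seq vec, exists C h1 : R, 0 < h1 /\ forall h t, 0 < h < h1 -> P t ->
     forall x, D x -> `|iter_dd (G h t) vs x| <= C * h ^+ N * \prod_(v <- vs) enorm v) ->
  exists2 A : R, 0 <= A & \forall h \near 0^'+, forall t, P t -> forall i z, D z ->
    `|'D_(ebasis R i) (G h t) z| <= A * h ^+ N.
Proof.
move=> Gbound.
have [C /choice[h1 Cbound]] := choice (fun i : 'I_d => Gbound [:: ebasis R i]).
exists (\sum_i `|C i|); first exact: sumr_ge0.
near=> h.
have h0 : 0 < h by near: h; apply: nbhs_right_gt.
have hh1 : forall i, h < h1 i.
  by near: h; apply: filter_forall => i; apply: nbhs_right_lt; case: (Cbound i).
move=> t Pt i z Dz.
have := (Cbound i).2 h t (introT andP (conj h0 (hh1 i))) Pt z Dz.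
rewrite /= big_cons big_nil enorm_ebasis !mulr1 => bound; apply: le_trans bound _.
apply: ler_wpM2r; first exact/exprn_ge0/ltW.
apply: le_trans (ler_norm _) _.
by rewrite (bigD1 i) //= lerDl sumr_ge0.
Unshelve. all: by end_near.
Qed.

End UniformBounds.

Lemma nbhs0_right_ex (R : realType) (Q : R -> Prop) : (\forall h \near 0^'+, Q h) ->
  exists2 h0 : R, 0 < h0 & forall h, 0 < h < h0 -> Q h.
Proof.
move=> /nbhs_ballP[e /= e0 eQ]; exists e => // h /andP[h0 he].
by apply: eQ => //; rewrite /ball /= sub0r normrN gtr0_norm.
Qed.

Lemma powRNhalf (R : realType) (h : R) : 0 <= h ->
  powR h (- (1 / 2)) = (Num.sqrt h)^-1.
Proof. by move=> h0; rewrite powRN div1r powR12_sqrt. Qed.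

Lemma powR3half (R : realType) (h : R) : 0 < h ->
  powR h (3 / 2) = h * Num.sqrt h.
Proof.
move=> h0; rewrite (_ : 3 / 2 = 1 + 2^-1); last by field.
by rewrite powRD ?gt_eqF ?implybT // (powRr1 (ltW h0)) powR12_sqrt ?ltW.
Qed.

Lemma near0_le_mul_powRNhalf (R : realType) (a C : R) : 0 < a -> 0 < C ->
  \forall h \near 0^'+, a <= C * powR h (- (1 / 2)).
Proof.
move=> a0 C0; near=> h.
have h0 : 0 < h by near: h; apply: nbhs_right_gt.
have hsmall : h < (C / a) ^+ 2 by near: h; apply/nbhs_right_lt/exprn_gt0/divr_gt0.
rewrite powRNhalf ?(ltW h0) // ler_pdivlMr ?sqrtr_gt0 // mulrC -ler_pdivlMr //.
apply/ltW; rewrite -(gtr0_norm (divr_gt0 C0 a0)) -sqrtr_sqr.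
by rewrite ltr_sqrt ?exprn_gt0 ?divr_gt0.
Unshelve. all: by end_near.
Qed.

Lemma Iq_subr (R : realType) (d : nat) (h : R) (vartheta m m' : 'rV[int]_d) :
  Iq h vartheta m - Iq h vartheta m' = h *: rvec R (m - m').
Proof. by apply/rowP => i; rewrite !mxE intrB; ring. Qed.

Lemma Mh_near_Ekappa (R : realType) (d : nat) (D : set 'rV[R]_d) (K0 : 'rV[R]_d -> R)
    (Delta : R -> R) (kappa L h : R) (vartheta m : 'rV[int]_d) :
  0 < h -> Mh D K0 Delta kappa L h vartheta m ->
  exists2 E, Ekappa D K0 Delta kappa E & enorm (Iq h vartheta m - E) <= (L + 1) * h.
Proof.
(* The distance is an infimum, hence only approached: we give up the slack h. *)
move=> h0 Mm.
have : (setdist (Ekappa D K0 Delta kappa) (Iq h vartheta m) < ((L + 1) * h)%:E)%E.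
  by apply: le_lt_trans Mm _; rewrite lte_fin mulrDl mul1r ltrDl.
by case/ereal_inf_lt => _ [E EE <-]; rewrite lte_fin => /ltW; exists E.
Qed.

Theorem proposition4p1
  (R : realType) (d : nat) (D : set 'rV[R]_d)
  (sigma : R) (Delta Dinv : R -> R)
  (t0 kappa L : R) (vartheta : 'rV[int]_d)
  (K : nat -> R -> 'rV[R]_d -> R)      (* K j t I = K_j(I;t) *)
  (K0h : R -> R -> 'rV[R]_d -> R)      (* K0h t h I = K^0(I;t,h) *)
  (hD : bounded_convex_domain D)
  (hsig : 0 < sigma) (hDelta : sigma_approx sigma Delta)
  (hDinv : is_inverse_of Delta Dinv)
  (ht0 : 0 < t0) (hkappa : 0 < kappa) (hL : 0 < L)
  (hKsmooth : forall j t, 0 < t < t0 -> smooth_on D (K j t))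
  (hKbound : forall j (vs : seq 'rV[R]_d), exists C : R,
      forall t, 0 < t < t0 -> forall x, D x ->
        `| iter_dd (K j t) vs x | <= C * \prod_(v <- vs) enorm v)
  (hK0smooth : forall t h, 0 < t < t0 -> 0 < h -> smooth_on D (K0h t h))
  (hK0asymp : forall (N : nat) (vs : seq 'rV[R]_d), exists C h1 : R, 0 < h1 /\
      forall h t, 0 < h < h1 -> 0 < t < t0 -> forall x, D x ->
        `| iter_dd (fun I => K0h t h I - \sum_(j < N) h ^+ j * K j t I) vs x |
          <= C * h ^+ N * \prod_(v <- vs) enorm v) :
  forall C1 : R, 0 < C1 ->
  (C1 * kappa * powR h (- (1 / 2)) / (Dinv (C1 * powR h (- (1 / 2)))) ^+ 2)
     @[h --> 0^'+] --> +oo ->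
  exists C2 : R, 0 < C2 /\ exists h0 : R, 0 < h0 /\
  forall h t, 0 < h < h0 -> 0 < t < t0 ->
  forall m m' : 'rV[int]_d, m != m' ->
    D (Iq h vartheta m) -> D (Iq h vartheta m') ->
    Mh D (K 0%N t) Delta kappa L h vartheta m ->
    enorm (Iq h vartheta m - Iq h vartheta m') <= h * Dinv (C1 * powR h (- (1 / 2))) ->
    C2 * powR h (3 / 2) <= `| K0h t h (Iq h vartheta m) - K0h t h (Iq h vartheta m') |.
Proof.
move=> C1 C1_gt0 lim.
case: hD => _ [_ [_ convD]]; case: hDelta => _ [Delta_incr [Delta_gt0 _]].
have [B B_ge0 hessK] := uniform_hessian_bound (hKbound 0%N).
have [A A_ge0 gradK0] := @uniform_gradient_bound_near _ _ _ _
  (fun h t I => K0h t h I - \sum_(j < 1) h ^+ j * K j t I) 1 (hK0asymp 1%N).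
set M := A * d%:R + B * d%:R ^+ 2 * (L + 2).
have [h0 h0_gt0 small] := nbhs0_right_ex ((near_andP _ _ _).2 (conj gradK0
  ((near_andP _ _ _).2 (conj (near0_le_mul_powRNhalf (Delta_gt0 0 (lexx 0)) C1_gt0)
  (cvgry_ge lim (2 * C1 ^+ 2 * M)))))).
exists (kappa / (2 * C1)); split; first by rewrite divr_gt0 ?mulr_gt0.
exists h0; split => // h t /[dup]/small[gradKh [Delta0_le lim_ge]] /andP[h_gt0 _].
move=> t_range m m' mm' Dm Dm' Mm xy.
set r := Num.sqrt h; have r_gt0 : 0 < r by rewrite sqrtr_gt0.
have h_r2 : h = r ^+ 2 by rewrite sqr_sqrtr ?ltW.
rewrite powR3half // -/r; rewrite powRNhalf ?(ltW h_gt0) // -/r in Delta0_le lim_ge xy.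
have [X_ge0 DeltaX] := hDinv _ Delta0_le.
set X := Dinv (C1 * r^-1) in lim_ge xy X_ge0 DeltaX.
have [E EE xE] := Mh_near_Ekappa h_gt0 Mm.
have k_ne0 : m - m' != 0 by rewrite subr_eq0.
have X_ge1 : 1 <= X.
  apply: le_trans (enorm_rvec_ge1 R k_ne0) _.
  by rewrite -(enormZ_ler_pM2l _ _ h_gt0) -(Iq_subr h vartheta).
have dK0 : forall i z, D z ->
    `|'D_(ebasis R i) (fun I => K0h t h I - K 0%N t I) z| <= A * h.
  move=> i z Dz; rewrite -[h in A * h]expr1; move: (gradKh t t_range i z Dz).
  by under eq_fun do rewrite big_ord1 expr0 mul1r.
have := quasi_eigenvalue_gap_ge convD (fun z => hKsmooth 0%N t t_range [::] z)
  (fun i z => hKsmooth 0%N t t_range [:: ebasis R i] z) (hessK t t_range)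
  (fun z Dz => differentiableB (hK0smooth t h t_range h_gt0 [::] z Dz)
                               (hKsmooth 0%N t t_range [::] z Dz))
  dK0 Delta_incr Delta_gt0 h_gt0 hkappa A_ge0 B_ge0 Dm Dm' k_ne0 (Iq_subr _ _ _ _) EE xE xy.
rewrite DeltaX => /(le_trans _); apply; rewrite h_r2.
exact: leading_term_dominates A_ge0 B_ge0 (ler0n _ _) (ltW hL) r_gt0 X_ge1 C1_gt0 lim_ge.
Qed.
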